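(* There is an absolute constant $C>0$ such that the following holds. Let $\varepsilon\in(0,1)$ and let $f:\mathbb R\to\mathbb R$ be $1$-smooth with $f\ge0$, $f(0)=1$ and $f'(0)\le-\varepsilon$. Then ZerothOrder terminates and outputs an $\varepsilon$-stationary point of $f$ using at most $C(1+\log(1/\varepsilon))$ queries to the zeroth- and first-order oracle.
   Context: $f:\mathbb R\to\mathbb R$ is $1$-smooth if it is continuously differentiable and $f'$ is $1$-Lipschitz; $x$ is an $\varepsilon$-stationary point if $|f'(x)|<\varepsilon$. The oracle returns $(f(x),f'(x))$ on query $x$; values at already-queried points are reused. Subroutines (each ''returns'' its output to the caller, and a recursive call's output is returned unchanged): BinarySearch$(x_0,x_1)$: $m=(x_0+x_1)/2$; if $|f'(m)|<\varepsilon$ return $m$; if $f'(m)\le-\varepsilon$ return BinarySearch$(m,x_1)$; if $f'(m)>0$ return BinarySearch$(x_0,m)$. BinarySearchIII$(x_-,x_+)$: $m=(x_-+x_+)/2$; if $|f'(m)|<\varepsilon$ return $m$; else if $f'(m)>0$ return BinarySearch$(x_-,m)$; else if $f(m)\ge f(x_-)$ return BinarySearchIII$(x_-,m)$; else return BinarySearchIII$(m,x_+)$. BinarySearchII$(x_-,x_+)$: $m=(x_-+x_+)/2$; if $|f'(m)|<\varepsilon$ return $m$; else if $f'(m)>0$ return BinarySearch$(x_-,m)$; else if $f(m)\ge f(x_-)$ return BinarySearchIII$(x_-,m)$; else if $f(m)\le f(x_+)$ return BinarySearchIII$(m,x_+)$; else if $f(x_-)-f(m)\le\frac12(f(x_-)-f(x_+))$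 return BinarySearchII$(x_-,m)$; else return BinarySearchII$(m,x_+)$. DecreaseGap$(x_0)$: let $y=x_0+2/\varepsilon$; if $|f'(y)|<\varepsilon$ return (''stationary'', $y$); else if $f'(y)>0$ return (''stationary'', BinarySearch$(x_0,y)$); else if $f(y)\ge\frac34 f(x_0)$ return (''base'', $x_0$); else return DecreaseGap$(y)$. ZerothOrder: run DecreaseGap$(0)$. If it returns (''stationary'', $z$), output $z$. If it returns (''base'', $x_-$), set $x_+=x_-+2/\varepsilon$; if $|f'(x_-)|<\varepsilon$ output $x_-$; else if $f(x_+)\le f(x_-)$ output BinarySearchII$(x_-,x_+)$; else output BinarySearchIII$(x_-,x_+)$. *)

From Stdlib Require Import Reals Lra List.
Import ListNotations.
Open Scope R_scope.

(* The algorithm ZerothOrder, run on f with oracle derivative df and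
   accuracy eps, modelled with a fuel parameter (each recursive call
   consumes one unit; fuel exhaustion yields None).  The list threaded
   through the computation is the set of DISTINCT points queried so far
   (an access to f(x) or f'(x) queries x; repeated points are reused and
   not recounted).  Its length is the number of oracle queries. *)

Definition qry (s : list R) (x : R) : list R :=
  if in_dec Req_EM_T x s then s else x :: s.

Section Algo.
Variables (f df : R -> R) (eps : R).

Fixpoint BinarySearch (n : nat) (x0 x1 : R) (s : list R)
  : option (R * list R) :=
  match n with
  | O => None
  | S n =>
    let m := (x0 + x1) / 2 in
    let s := qry s m in
    if Rlt_dec (Rabs (df m)) eps then Some (m, s)
    else if Rle_dec (df m) (- eps) then BinarySearch n m x1 s
    else if Rlt_dec 0 (df m) then BinarySearch n x0 m s
    else None (* unreachable *)
  end.

Fixpoint BinarySearchIII (n : nat) (xm xp : R) (s : list R)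
  : option (R * list R) :=
  match n with
  | O => None
  | S n =>
    let m := (xm + xp) / 2 in
    let s := qry s m in
    if Rlt_dec (Rabs (df m)) eps then Some (m, s)
    else if Rlt_dec 0 (df m) then BinarySearch n xm m s
    else
      let s := qry s xm in
      if Rge_dec (f m) (f xm) then BinarySearchIII n xm m s
      else BinarySearchIII n m xp s
  end.

Fixpoint BinarySearchII (n : nat) (xm xp : R) (s : list R)
  : option (R * list R) :=
  match n with
  | O => None
  | S n =>
    let m := (xm + xp) / 2 in
    let s := qry s m in
    if Rlt_dec (Rabs (df m)) eps then Some (m, s)
    else if Rlt_dec 0 (df m) then BinarySearch n xm m s
    else
      let s := qry s xm in
      if Rge_dec (f m) (f xm) then BinarySearchIII n xm m s
      else
        let s := qry s xp in
        if Rle_dec (f m) (f xp) then BinarySearchIII n m xp s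
        else if Rle_dec (f xm - f m) (/2 * (f xm - f xp))
        then BinarySearchII n xm m s
        else BinarySearchII n m xp s
  end.

(* result: inl z = ("stationary", z), inr x = ("base", x) *)
Fixpoint DecreaseGap (n : nat) (x0 : R) (s : list R)
  : option ((R + R) * list R) :=
  match n with
  | O => None
  | S n =>
    let y := x0 + 2 / eps in
    let s := qry s y in
    if Rlt_dec (Rabs (df y)) eps then Some (inl y, s)
    else if Rlt_dec 0 (df y) then
      match BinarySearch n x0 y s with
      | Some (z, s') => Some (inl z, s')
      | None => None
      end
    else
      let s := qry s x0 in
      if Rge_dec (f y) (3/4 * f x0) then Some (inr x0, s)
      else DecreaseGap n y s
  end.

Definition ZerothOrder (n : nat) : option (R * list R) :=
  match DecreaseGap n 0 [] with
  | None => None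
  | Some (inl z, s) => Some (z, s)
  | Some (inr xm, s) =>
    let xp := xm + 2 / eps in
    let s := qry s xm in
    if Rlt_dec (Rabs (df xm)) eps then Some (xm, s)
    else
      let s := qry (qry s xm) xp in
      if Rle_dec (f xp) (f xm) then BinarySearchII n xm xp s
      else BinarySearchIII n xm xp s
  end.

End Algo.

Definition one_smooth (f df : R -> R) : Prop :=
  (forall x, derivable_pt_lim f x (df x)) /\
  (forall x, continuity_pt df x) /\
  (forall x y, Rabs (df x - df y) <= Rabs (x - y)).

From Stdlib Require Import Reals List.
From Stdlib Require Import Lra Lia ZArith.
Open Scope R_scope.

(* Every call of a search routine either stops at an [eps]-stationary point
   or halves an interval whose end points keep an invariant that forces the
   interval to be long: a derivative sign change [df x0 <= -eps <= eps <= df x1]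
   costs width [2 eps] by the Lipschitz bound, and a descent direction at the
   left end together with [f xm <= f xp] (or with a gap [f xm - f xp] that is
   small relative to the width) costs width of order [eps] by the quadratic
   upper bound.  Starting from width [2/eps], each search therefore stops after
   [O(log (1/eps))] halvings.  DecreaseGap multiplies [f] by [3/4] at each
   step while [f >= (df)^2/4 >= eps^2/4] at points of descent, so it also stops
   after [O(log (1/eps))] steps.  Each step queries at most three new points. *)

Lemma qry_length_le s x : (length (qry s x) <= S (length s))%nat.
Proof. unfold qry; destruct in_dec; simpl; lia. Qed.

Lemma not_Rabs_lt_cases a e : ~ Rabs a < e -> a <= - e \/ e <= a.
Proof.
  intros H. destruct (Rle_dec a (- e)) as [|Ha]; [now left|right].
  destruct (Rle_dec e a) as [|He]; [easy|].
  exfalso; apply H, Rabs_def1; lra.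
Qed.

Lemma midpoint_halves c k a b : a < b -> b - a < c * 2 ^ S k ->
  a < (a + b) / 2 < b /\ (a + b) / 2 - a < c * 2 ^ k /\ b - (a + b) / 2 < c * 2 ^ k.
Proof. simpl; intros; repeat split; lra. Qed.

Section Smooth.

Variables (f df : R -> R) (eps : R).
Hypothesis smooth_f : one_smooth f df.
Hypothesis eps_gt0 : 0 < eps.

Lemma one_smooth_upper_quadratic x y :
  f y <= f x + df x * (y - x) + (y - x) ^ 2.
Proof.
  destruct smooth_f as [Hd [_ HL]].
  destruct (Rtotal_order x y) as [Hxy|[<-|Hyx]].
  - destruct (MVT_cor2 f df x y Hxy (fun c _ => Hd c)) as [c [Hc Hcr]].
    assert (Hdc : df c <= df x + (y - x)).
    { specialize (HL c x). rewrite (Rabs_right (c - x)) in HL by lra.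
      pose proof (Rle_abs (df c - df x)). lra. }
    assert (df c * (y - x) <= (df x + (y - x)) * (y - x))
      by (apply Rmult_le_compat_r; lra).
    lra.
  - lra.
  - destruct (MVT_cor2 f df y x Hyx (fun c _ => Hd c)) as [c [Hc Hcr]].
    assert (Hdc : df x - (x - y) <= df c).
    { specialize (HL x c). rewrite (Rabs_right (x - c)) in HL by lra.
      pose proof (Rle_abs (df x - df c)). lra. }
    assert ((df x - (x - y)) * (x - y) <= df c * (x - y))
      by (apply Rmult_le_compat_r; lra).
    lra.
Qed.

Lemma descent_decrease x y : x < y -> df x <= - eps ->
  eps * (y - x) - (y - x) ^ 2 <= f x - f y.
Proof.
  intros Hxy Hx. pose proof (one_smooth_upper_quadratic x y).
  assert (df x * (y - x) <= - eps * (y - x)) by (apply Rmult_le_compat_r; lra).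
  lra.
Qed.

Lemma one_smooth_nonneg_sqr_deriv_le : (forall x, 0 <= f x) ->
  forall x, df x ^ 2 / 4 <= f x.
Proof.
  intros Hpos x.
  pose proof (one_smooth_upper_quadratic x (x - df x / 2)).
  pose proof (Hpos (x - df x / 2)).
  replace (x - df x / 2 - x) with (- df x / 2) in * by field. nra.
Qed.

Lemma deriv_sign_change_width x0 x1 : df x0 <= - eps -> eps <= df x1 ->
  2 * eps <= Rabs (x1 - x0).
Proof.
  destruct smooth_f as [_ [_ HL]]. intros H0 H1.
  specialize (HL x1 x0). pose proof (Rle_abs (df x1 - df x0)). lra.
Qed.

Definition returns_stationary (r : option (R * list R)) (s : list R) (q : nat) :=
  exists z s', r = Some (z, s') /\ Rabs (df z) < eps /\
    (length s' <= length s + q)%nat.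

Lemma returns_stationary_now z s q : Rabs (df z) < eps ->
  returns_stationary (Some (z, s)) s q.
Proof. intros Hz. exists z, s. repeat split; auto; lia. Qed.

Lemma returns_stationary_weaken r s q q' : (q <= q')%nat ->
  returns_stationary r s q -> returns_stationary r s q'.
Proof. intros Hq (z & s' & E & Hz & Hl). exists z, s'. repeat split; auto; lia. Qed.

Lemma returns_stationary_qry x q r s q' : (S q <= q')%nat ->
  returns_stationary r (qry s x) q -> returns_stationary r s q'.
Proof.
  intros Hq (z & s' & E & Hz & Hl). pose proof (qry_length_le s x).
  exists z, s'. repeat split; auto; lia.
Qed.

Lemma returns_stationary_extend s0 p r s q q' :
  (length s <= length s0 + p)%nat -> (p + q <= q')%nat ->
  returns_stationary r s q -> returns_stationary r s0 q'.
Proof. intros Hs Hq (z & s' & E & Hz & Hl). exists z, s'. repeat split; auto; lia. Qed.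

Lemma BinarySearch_spec k n x0 x1 s : (k <= n)%nat ->
  df x0 <= - eps -> eps <= df x1 -> x0 < x1 -> x1 - x0 < 2 * eps * 2 ^ k ->
  returns_stationary (BinarySearch df eps n x0 x1 s) s k.
Proof.
  revert n x0 x1 s; induction k as [|k IH]; intros n x0 x1 s Hkn H0 H1 Hx Hw.
  - pose proof (deriv_sign_change_width x0 x1 H0 H1).
    rewrite Rabs_right in * by lra. simpl in Hw; lra.
  - destruct n as [|n]; [lia|]. cbn [BinarySearch].
    destruct (midpoint_halves _ _ _ _ Hx Hw) as ([Hm0 Hm1] & Hl & Hr).
    set (m := (x0 + x1) / 2) in *.
    apply (returns_stationary_qry m k); [lia|].
    destruct (Rlt_dec (Rabs (df m)) eps) as [Hm|Hm];
      [now apply returns_stationary_now|].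
    destruct (Rle_dec (df m) (- eps)); [apply IH; auto; lia|].
    destruct (Rlt_dec 0 (df m)).
    + destruct (not_Rabs_lt_cases _ _ Hm); [lra|]. apply IH; auto; lia.
    + destruct Hm. apply Rabs_def1; lra.
Qed.

Lemma BinarySearchIII_spec k n xm xp s : (k <= n)%nat ->
  df xm <= - eps -> f xm <= f xp -> xm < xp -> xp - xm < eps * 2 ^ k ->
  returns_stationary (BinarySearchIII f df eps n xm xp s) s (2 * k).
Proof.
  revert n xm xp s; induction k as [|k IH]; intros n xm xp s Hkn H0 H1 Hx Hw.
  - pose proof (descent_decrease xm xp Hx H0). simpl in Hw. nra.
  - destruct n as [|n]; [lia|]. cbn [BinarySearchIII].
    destruct (midpoint_halves _ _ _ _ Hx Hw) as ([Hm0 Hm1] & Hl & Hr).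
    set (m := (xm + xp) / 2) in *.
    apply (returns_stationary_qry m (S (2 * k))); [lia|].
    destruct (Rlt_dec (Rabs (df m)) eps) as [Hm|Hm];
      [now apply returns_stationary_now|].
    destruct (Rlt_dec 0 (df m)).
    + destruct (not_Rabs_lt_cases _ _ Hm); [lra|].
      apply (returns_stationary_weaken _ _ k); [lia|].
      pose proof (pow_lt 2 k ltac:(lra)).
      apply BinarySearch_spec; auto; [lia|nra].
    + destruct (not_Rabs_lt_cases _ _ Hm); [|lra].
      apply (returns_stationary_qry xm (2 * k)); [lia|].
      destruct (Rge_dec (f m) (f xm)); apply IH; auto; lia || lra.
Qed.

Lemma BinarySearchII_spec k n xm xp s : (k <= n)%nat ->
  df xm <= - eps -> xm < xp -> f xp <= f xm ->
  4 * (f xm - f xp) <= eps * (xp - xm) -> xp - xm < eps / 2 * 2 ^ k ->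
  returns_stationary (BinarySearchII f df eps n xm xp s) s (3 * k).
Proof.
  revert n xm xp s; induction k as [|k IH];
    intros n xm xp s Hkn H0 Hx H1 Hgap Hw.
  - pose proof (descent_decrease xm xp Hx H0). simpl in Hw. nra.
  - destruct n as [|n]; [lia|]. cbn [BinarySearchII].
    pose proof (pow_lt 2 k ltac:(lra)).
    destruct (midpoint_halves _ _ _ _ Hx Hw) as ([Hm0 Hm1] & Hl & Hr).
    assert (Hhalf : (xm + xp) / 2 - xm = (xp - xm) / 2) by field.
    assert (Hhalf' : xp - (xm + xp) / 2 = (xp - xm) / 2) by field.
    set (m := (xm + xp) / 2) in *.
    apply (returns_stationary_qry m (S (S (3 * k)))); [lia|].
    destruct (Rlt_dec (Rabs (df m)) eps) as [Hm|Hm];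
      [now apply returns_stationary_now|].
    destruct (Rlt_dec 0 (df m)).
    + destruct (not_Rabs_lt_cases _ _ Hm); [lra|].
      apply (returns_stationary_weaken _ _ k); [lia|].
      apply BinarySearch_spec; auto; [lia|nra].
    + destruct (not_Rabs_lt_cases _ _ Hm); [|lra].
      apply (returns_stationary_qry xm (S (3 * k))); [lia|].
      destruct (Rge_dec (f m) (f xm)).
      { apply (returns_stationary_weaken _ _ (2 * k)); [lia|].
        apply BinarySearchIII_spec; auto; [lia|lra|nra]. }
      apply (returns_stationary_qry xp (3 * k)); [lia|].
      destruct (Rle_dec (f m) (f xp)).
      { apply (returns_stationary_weaken _ _ (2 * k)); [lia|].
        apply BinarySearchIII_spec; auto; [lia|nra]. }
      destruct (Rle_dec (f xm - f m) (/ 2 * (f xm - f xp)));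
        apply IH; auto; try lia; try lra; rewrite ?Hhalf, ?Hhalf'; lra.
Qed.

Definition DecreaseGap_post (x0 : R) (r : R + R) : Prop :=
  match r with
  | inl z => Rabs (df z) < eps
  | inr x => df x <= - eps /\ f x <= f x0 /\ 3 / 4 * f x <= f (x + 2 / eps)
  end.

Lemma DecreaseGap_spec : (forall x, 0 <= f x) ->
  forall K j n x0 s, (j + K <= n)%nat -> df x0 <= - eps ->
  f x0 < eps ^ 2 / 4 * (4 / 3) ^ j -> 2 / eps < 2 * eps * 2 ^ K ->
  exists r s', DecreaseGap f df eps n x0 s = Some (r, s') /\
    (length s' <= length s + 2 * j + K)%nat /\ DecreaseGap_post x0 r.
Proof.
  intros Hpos K j; induction j as [|j IH]; intros n x0 s Hn H0 Hf HK.
  - pose proof (one_smooth_nonneg_sqr_deriv_le Hpos x0). simpl in Hf. nra.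
  - destruct n as [|n]; [lia|]. cbn [DecreaseGap].
    set (y := x0 + 2 / eps).
    assert (Hy : 0 < 2 / eps) by (apply Rdiv_lt_0_compat; lra).
    pose proof (qry_length_le s y).
    destruct (Rlt_dec (Rabs (df y)) eps) as [Hm|Hm].
    { exists (inl y), (qry s y). repeat split; auto. lia. }
    destruct (Rlt_dec 0 (df y)).
    { destruct (not_Rabs_lt_cases _ _ Hm); [lra|].
      destruct (BinarySearch_spec K n x0 y (qry s y)) as (z & s' & -> & Hz & Hl);
        auto; try lia; unfold y; try lra.
      exists (inl z), s'. repeat split; auto. lia. }
    destruct (not_Rabs_lt_cases _ _ Hm); [|lra].
    pose proof (qry_length_le (qry s y) x0).
    destruct (Rge_dec (f y) (3 / 4 * f x0)).
    { exists (inr x0), (qry (qry s y) x0). repeat split; unfold y in *; try lia; lra. }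
    pose proof (Hpos x0). simpl in Hf.
    destruct (IH n y (qry (qry s y) x0)) as (r & s' & E & Hl & Hr);
      try lia; try lra.
    exists r, s'. repeat split; auto; [lia|].
    destruct r; simpl in *; lra.
Qed.

Lemma ZerothOrder_spec N : (forall x, 0 <= f x) -> f 0 = 1 -> df 0 <= - eps ->
  1 < eps ^ 2 / 4 * (4 / 3) ^ N -> 2 / eps < eps / 2 * 2 ^ N ->
  returns_stationary (ZerothOrder f df eps (N + N)) nil (6 * N + 3).
Proof.
  intros Hpos Hf0 Hd0 Hstart Hwidth.
  assert (Hinv : 0 < 2 / eps) by (apply Rdiv_lt_0_compat; lra).
  pose proof (pow_lt 2 N ltac:(lra)).
  destruct (DecreaseGap_spec Hpos N N (N + N) 0 nil) as (r & s & E & Hl & Hr);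
    auto; try lia; try lra.
  unfold ZerothOrder. rewrite E.
  apply (returns_stationary_extend nil (3 * N) _ s (3 * N + 3)); [simpl in *; lia..|].
  destruct r as [z|xm]; [now apply returns_stationary_now|].
  destruct Hr as (Hd & Hf1 & Hf2). cbv zeta.
  apply (returns_stationary_qry xm (S (S (3 * N)))); [lia|].
  destruct (Rlt_dec (Rabs (df xm)) eps); [now apply returns_stationary_now|].
  apply (returns_stationary_qry xm (S (3 * N))); [lia|].
  apply (returns_stationary_qry (xm + 2 / eps) (3 * N)); [lia|].
  destruct (Rle_dec (f (xm + 2 / eps)) (f xm)).
  - apply BinarySearchII_spec; try lia; try lra.
    replace (xm + 2 / eps - xm) with (2 / eps) by ring.
    replace (eps * (2 / eps)) with 2 by (field; lra). lra.
  - apply (returns_stationary_weaken _ _ (2 * N)); [lia|].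
    apply BinarySearchIII_spec; try lia; try lra.
Qed.

End Smooth.

Lemma ln_nonneg x : 1 <= x -> 0 <= ln x.
Proof.
  intros Hx. destruct (Req_dec x 1) as [->|Hne]; [rewrite ln_1; lra|].
  rewrite <- ln_1. left. apply ln_increasing; lra.
Qed.

Lemma exp_INR_le_pow3 m : exp (INR m) <= 3 ^ m.
Proof.
  induction m as [|m IH]; [simpl; rewrite exp_0; lra|].
  rewrite S_INR, exp_plus. simpl.
  pose proof exp_le_3. pose proof (exp_pos (INR m)). nra.
Qed.

(* [(4/3)^4 >= 3 >= e], so [(4/3)^(4 m) >= e^m]. *)
Lemma pow_four_thirds_gt x : 1 <= x ->
  exists N : nat, x < (4 / 3) ^ N /\ INR N <= 4 * ln x + 4.
Proof.
  intros Hx.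
  pose proof (ln_nonneg x Hx) as Hln.
  destruct (archimed (ln x)) as [Hup1 Hup2].
  assert (Hup : (0 < up (ln x))%Z) by (apply lt_0_IZR; lra).
  set (m := Z.to_nat (up (ln x))).
  assert (Hm : INR m = IZR (up (ln x)))
    by (unfold m; rewrite INR_IZR_INZ, Z2Nat.id; auto; lia).
  exists (4 * m)%nat. split.
  - rewrite pow_mult.
    assert (H3 : 3 ^ m <= ((4 / 3) ^ 4) ^ m) by (apply pow_incr; simpl; lra).
    pose proof (exp_INR_le_pow3 m).
    assert (x < exp (INR m)) by (rewrite <- (exp_ln x) by lra; apply exp_increasing; lra).
    lra.
  - rewrite mult_INR, Hm. simpl. lra.
Qed.

Lemma ln_four_div_sqr_le eps : 0 < eps -> ln (4 / eps ^ 2) <= 2 + 2 * ln (1 / eps).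
Proof.
  intros He.
  assert (Hln2 : ln 2 < 1).
  { rewrite <- (ln_exp 1). apply ln_increasing; [lra|].
    pose proof (exp_ineq1 1 ltac:(lra)). lra. }
  replace (4 / eps ^ 2) with ((2 * (1 / eps)) ^ 2) by (field; lra).
  assert (0 < 1 / eps) by (apply Rdiv_lt_0_compat; lra).
  rewrite ln_pow, ln_mult by lra. simpl. lra.
Qed.

Theorem theorem2p5 :
  exists C : R, 0 < C /\
  forall (eps : R) (f df : R -> R),
    0 < eps < 1 ->
    one_smooth f df ->
    (forall x, 0 <= f x) ->
    f 0 = 1 ->
    df 0 <= - eps ->
    exists (n : nat) (z : R) (s : list R),
      ZerothOrder f df eps n = Some (z, s) /\
      Rabs (df z) < eps /\
      INR (length s) <= C * (1 + ln (1 / eps)).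
Proof.
  exists 75. split; [lra|].
  intros eps f df He Hs Hpos Hf0 Hd0.
  assert (Heps2 : 0 < eps ^ 2) by (apply pow_lt; lra).
  assert (Hfour : 1 <= 4 / eps ^ 2)
    by (apply (Rmult_le_reg_r (eps ^ 2)); [lra|]; field_simplify; nra).
  assert (HL : 0 <= ln (1 / eps))
    by (apply ln_nonneg, (Rmult_le_reg_r eps); [lra|]; field_simplify; lra).
  destruct (pow_four_thirds_gt _ Hfour) as (N & HN & HNle).
  pose proof (ln_four_div_sqr_le eps (proj1 He)).
  assert (Hstart : 1 < eps ^ 2 / 4 * (4 / 3) ^ N).
  { apply (Rmult_lt_compat_l (eps ^ 2 / 4)) in HN; [|lra].
    replace (eps ^ 2 / 4 * (4 / eps ^ 2)) with 1 in HN by (field; lra). lra. }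
  assert (Hwidth : 2 / eps < eps / 2 * 2 ^ N).
  { assert ((4 / 3) ^ N <= 2 ^ N) by (apply pow_incr; lra).
    apply (Rmult_lt_reg_r (2 * eps)); [lra|].
    replace (2 / eps * (2 * eps)) with 4 by (field; lra). nra. }
  destruct (ZerothOrder_spec f df eps Hs (proj1 He) N Hpos Hf0 Hd0 Hstart Hwidth)
    as (z & s & E & Hz & Hlen).
  exists (N + N)%nat, z, s. repeat split; auto.
  apply le_INR in Hlen. rewrite !plus_INR, mult_INR in Hlen.
  simpl in Hlen. lra.
Qed.
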